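(* Let $p\in Pr$ and let $\mathcal{T}$ be a set of $\mathrm{HL}$-types such that every $T\in\mathcal{T}$ has no skeleton subtypes and $p$ is lonely in $T$. If $H$ is a graph all of whose edges are labeled by elements of $\mathcal{T}\cup\{p\}$ and $\mathrm{HL}\vdash H\to p$, then $H=p^\bullet$.
   Context: Hypergraphs: given labels $C$ with $type:C\to\mathbb{N}$, a graph is $G=\langle V,E,att,lab,ext\rangle$ with finite $V,E$, $att:E\to V^\circledast$ (strings of distinct nodes), $lab:E\to C$ with $type(lab(e))=|att(e)|$, $ext\in V^\circledast$; $type(G)=|ext|$; isomorphic graphs identified. Handle $a^\bullet$: nodes $v_1..v_n$, one edge labeled $a$ with $att=v_1\dots v_n$, $ext=v_1\dots v_n$. Replacement $G[e/H]$: remove $e$, insert a disjoint copy of $H$, fuse $i$-th external node of $H$ with $i$-th attachment node of $e$; simultaneous replacement; relabeling $G[e:=a]$. $\mathrm{HL}$: primitive types $Pr$ with $type:Pr\to\mathbb{N}$ (infinitely many of each arity); symbol $\$$ of any arity. Types: primitives; $N\div D$ where $D$ has exactly one edge $d_0$ labeled $\$$, others labeled by types, $type(N)=type(D)$, $type(N\div D)=type_D(d_0)$; $\times(M)$ for a type-labeled graph $M$, $type(\times(M))=type(M)$. Subtypes of a type are the occurrences of types in its inductive construction (the type itself, and recursively subtypes of $N$ and of edge labels of $D$ for $N\div D$, and of edge labels of $M$ for $\times(M)$). Graph sequent $H\to A$ with $type(H)=type(A)$. Axioms $p^\bullet\to p$. Rules: $(\div\to)$: for $N\div D$ with $E_D=\{d_0,\dots,d_k\}$,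 $e\in E_H$ labeled $N$: from $H\to A$, $H_i\to lab(d_i)$ infer $H[e/D][d_0:=N\div D][d_1/H_1,\dots,d_k/H_k]\to A$; $(\to\div)$: from $D[d_0/F]\to N$ infer $F\to N\div D$; $(\times\to)$: if $e\in E_G$ is labeled $\times(F)$, from $G[e/F]\to A$ infer $G\to A$; $(\to\times)$: with $E_M=\{m_1,\dots,m_l\}$, from $H_i\to lab(m_i)$ infer $M[m_1/H_1,\dots,m_l/H_l]\to\times(M)$. Top occurrence: a subtype occurrence $B$ is a top occurrence within $A$ if $A=B$; or $A=\times(M)$ and $B$ is a top occurrence within $lab(e_0)$ for some $e_0\in E_M$; or $A=N\div D$ and $B$ is a top occurrence within $N$. A primitive $p$ is lonely in a type $A$ if for each top occurrence of $p$ within $A$ there is a subtype $\times(M)$ of $A$ with $|E_M|\ge2$ and some $e_0\in E_M$ whose label $lab(e_0)=p$ is that top occurrence. A type is skeleton if it equals $\times(M)$ with $E_M=\emptyset$ and $|ext_M|=|V_M|$. *)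

From Stdlib Require Import List Arith Bool PeanoNat Permutation.
Import ListNotations.
Set Implicit Arguments.

(** Graphs are identified up to isomorphism via [giso] below. *)
Record graph (L : Type) := mkGraph {
  gV : list nat;
  gE : list (L * list nat);
  gext : list nat }.
Arguments mkGraph {L}.
Arguments gV {L}.
Arguments gE {L}.
Arguments gext {L}.

Definition wf_graph {L} (G : graph L) : Prop :=
  NoDup (gV G) /\ NoDup (gext G) /\ incl (gext G) (gV G) /\
  (forall e, In e (gE G) -> NoDup (snd e) /\ incl (snd e) (gV G)).

Definition lab_at {L} (G : graph L) (i : nat) : option L :=
  option_map fst (nth_error (gE G) i).

Definition map_lab {L L'} (g : L -> L') (G : graph L) : graph L' :=
  mkGraph (gV G) (map (fun e => (g (fst e), snd e)) (gE G)) (gext G).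

Definition giso {L L'} (R : L -> L' -> Prop) (G : graph L) (H : graph L') : Prop :=
  exists f : nat -> nat,
    (forall x y, In x (gV G) -> In y (gV G) -> f x = f y -> x = y) /\
    Permutation (map f (gV G)) (gV H) /\
    map f (gext G) = gext H /\
    exists es, Permutation es (gE H) /\
      Forall2 (fun e1 e2 => R (fst e1) (fst e2) /\ map f (snd e1) = snd e2) (gE G) es.

Fixpoint pos (x : nat) (l : list nat) : option nat :=
  match l with
  | [] => None
  | y :: l' => if Nat.eqb x y then Some 0 else option_map S (pos x l')
  end.

Definition fresh {L} (G : graph L) : nat := S (fold_right Nat.max 0 (gV G)).

(** image of node [v] of the inserted graph [H], for an edge attached at [a],
    internal nodes shifted by [s]; the j-th external node is fused with the
    j-th attachment node *)
Definition embed_node {L} (H : graph L) (a : list nat) (s v : nat) : nat :=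
  match pos v (gext H) with Some j => nth j a 0 | None => s + v end.

Definition new_nodes {L} (H : graph L) (s : nat) : list nat :=
  map (Nat.add s) (filter (fun v => match pos v (gext H) with Some _ => false | None => true end) (gV H)).

Definition new_edges {L} (H : graph L) (a : list nat) (s : nat) : list (L * list nat) :=
  map (fun e => (fst e, map (embed_node H a s) (snd e))) (gE H).

(** simultaneous replacement: the edge with index i is replaced by [H] when
    [f i = Some H] (its edges are put at its place in the edge list) *)
Fixpoint repl_go {L} (f : nat -> option (graph L)) (es : list (L * list nat)) (i s : nat)
  : list nat * list (L * list nat) :=
  match es with
  | [] => ([], [])
  | e :: es' =>
    match f i with
    | None => let r := repl_go f es' (S i) s in (fst r, e :: snd r)
    | Some H => let r := repl_go f es' (S i) (s + fresh H) in
                (new_nodes H s ++ fst r, new_edges H (snd e) s ++ snd r)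
    end
  end.

Definition repl {L} (G : graph L) (f : nat -> option (graph L)) : graph L :=
  let r := repl_go f (gE G) 0 (fresh G) in
  mkGraph (gV G ++ fst r) (snd r) (gext G).

Definition single {L} (e : nat) (H : graph L) : nat -> option (graph L) :=
  fun j => if Nat.eqb j e then Some H else None.

(** * HL types.  [Prim n k] is the n-th primitive type of arity k;
    in [Div N D], the label [None] of D stands for the symbol $. *)
Inductive typ : Type :=
| Prim : nat -> nat -> typ
| Div : typ -> graph (option typ) -> typ
| Prod : graph typ -> typ.

Definition typeOf (A : typ) : nat :=
  match A with
  | Prim _ k => k
  | Div _ D =>
      match find (fun e => match fst e with None => true | Some _ => false end) (gE D) with
      | Some e => length (snd e) | None => 0 end
  | Prod M => length (gext M)
  end.

Inductive wf_typ : typ -> Prop :=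
| wf_prim n k : wf_typ (Prim n k)
| wf_div N D :
    wf_typ N -> wf_graph D ->
    length (filter (fun e => match fst e with None => true | Some _ => false end) (gE D)) = 1 ->
    (forall T a, In (Some T, a) (gE D) -> wf_typ T /\ typeOf T = length a) ->
    typeOf N = length (gext D) ->
    wf_typ (Div N D)
| wf_prod M :
    wf_graph M ->
    (forall e, In e (gE M) -> wf_typ (fst e) /\ typeOf (fst e) = length (snd e)) ->
    wf_typ (Prod M).

Definition wf_lgraph (G : graph typ) : Prop :=
  wf_graph G /\ (forall e, In e (gE G) -> wf_typ (fst e) /\ typeOf (fst e) = length (snd e)).

(** equality of types, where graphs occurring in types are identified up to
    isomorphism *)
Inductive typ_equiv : typ -> typ -> Prop :=
| te_prim n k : typ_equiv (Prim n k) (Prim n k)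
| te_div N N' D D' :
    typ_equiv N N' ->
    (exists f : nat -> nat,
      (forall x y, In x (gV D) -> In y (gV D) -> f x = f y -> x = y) /\
      Permutation (map f (gV D)) (gV D') /\
      map f (gext D) = gext D' /\
      exists es, Permutation es (gE D') /\
        Forall2 (fun e1 e2 => ((fst e1 = None /\ fst e2 = None) \/
             exists x y, fst e1 = Some x /\ fst e2 = Some y /\ typ_equiv x y) /\ map f (snd e1) = snd e2)
          (gE D) es) ->
    typ_equiv (Div N D) (Div N' D')
| te_prod M M' :
    (exists f : nat -> nat,
      (forall x y, In x (gV M) -> In y (gV M) -> f x = f y -> x = y) /\
      Permutation (map f (gV M)) (gV M') /\
      map f (gext M) = gext M' /\
      exists es, Permutation es (gE M') /\
        Forall2 (fun e1 e2 => typ_equiv (fst e1) (fst e2) /\ map f (snd e1) = snd e2)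
          (gE M) es) ->
    typ_equiv (Prod M) (Prod M').

Definition handle (n k : nat) : graph typ :=
  mkGraph (seq 0 k) [(Prim n k, seq 0 k)] (seq 0 k).

(** conclusion of the (÷→) rule:  H[e/D][d0 := N÷D][d1/H1,...,dk/Hk],
    where the premise graph for the edge d_i of D (index i) is [Hs i] *)
Definition divL_concl (H : graph typ) (e : nat) (N : typ) (D : graph (option typ))
  (Hs : nat -> graph typ) : graph typ :=
  let G1 := repl (map_lab Some H) (single e D) in
  let G2 := map_lab (fun o => match o with None => Div N D | Some T => T end) G1 in
  repl G2 (fun j => if (e <=? j) && (j <? e + length (gE D)) then
                      match lab_at D (j - e) with
                      | Some (Some _) => Some (Hs (j - e))
                      | _ => None end
                    else None).

Definition plug_dollar (D : graph (option typ)) (F : graph typ) : graph typ :=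
  map_lab (fun o => match o with Some T => T | None => Prim 0 0 end)
    (repl D (fun i => match lab_at D i with
                      | Some None => Some (map_lab Some F)
                      | _ => None end)).

Inductive derivable : graph typ -> typ -> Prop :=
| d_ax n k : derivable (handle n k) (Prim n k)
| d_divL N D H e A (Hs : nat -> graph typ) :
    wf_typ (Div N D) ->
    lab_at H e = Some N ->
    derivable H A ->
    (forall i T, lab_at D i = Some (Some T) -> derivable (Hs i) T) ->
    derivable (divL_concl H e N D Hs) A
| d_divR N D F :
    wf_typ (Div N D) -> wf_lgraph F ->
    length (gext F) = typeOf (Div N D) ->
    derivable (plug_dollar D F) N ->
    derivable F (Div N D)
| d_prodL G e F A :
    wf_lgraph G ->
    lab_at G e = Some (Prod F) ->
    derivable (repl G (single e F)) A ->
    derivable G A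
| d_prodR M (Hs : nat -> graph typ) :
    wf_typ (Prod M) ->
    (forall i T, lab_at M i = Some T -> derivable (Hs i) T) ->
    derivable (repl M (fun i => if i <? length (gE M) then Some (Hs i) else None)) (Prod M)
| d_iso G G' A A' :
    derivable G A -> giso typ_equiv G G' -> typ_equiv A A' -> derivable G' A'.

Inductive step := SNum | SDen (i : nat) | SProd (i : nat).

Fixpoint sub_at (p : list step) (A : typ) : option typ :=
  match p with
  | [] => Some A
  | s :: p' =>
    match s, A with
    | SNum, Div N _ => sub_at p' N
    | SDen i, Div _ D =>
        match lab_at D i with Some (Some T) => sub_at p' T | _ => None end
    | SProd i, Prod M =>
        match lab_at M i with Some T => sub_at p' T | None => None end
    | _, _ => None
    end
  end.

Definition top_path (p : list step) : Prop :=
  forall s, In s p -> match s with SDen _ => False | _ => True end.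

Definition skeleton (A : typ) : Prop :=
  match A with
  | Prod M => gE M = [] /\ length (gext M) = length (gV M)
  | _ => False
  end.

Definition no_skeleton_subtypes (A : typ) : Prop :=
  forall p B, sub_at p A = Some B -> ~ skeleton B.

Definition lonely (q : typ) (A : typ) : Prop :=
  forall p, top_path p -> sub_at p A = Some q ->
    exists p' i M, p = p' ++ [SProd i] /\ sub_at p' A = Some (Prod M) /\
                   2 <= length (gE M).

(* Call a label admissible ([top_sub]) if it is [p] or, up to equivalence, a top
   occurrence inside a member of [Tset].  By induction on derivations, if every
   label of [G] is admissible and [G -> p] is derivable, then [G] is a single
   [p]-edge attached to its external nodes and has no other nodes.  Right rules never conclude a
   primitive type, and the premises of the left rules again have admissible
   labels.  In a (÷→) step the premise [H -> p] forces the decomposed numerator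
   to be [p], a top occurrence that loneliness forbids outside products.  In a
   (×→) step on [×(M)] the premise leaves room for at most one edge of [M]: with
   none, [M] has no internal node (it would survive as a fresh node), so it is a
   skeleton; with one, it is a [p]-edge of a product with fewer than two edges,
   again contradicting loneliness. *)

From Stdlib Require Import List Bool PeanoNat Permutation Lia.
Import ListNotations.

Lemma Forall2_In_l {A B} (R : A -> B -> Prop) l1 l2 x :
  Forall2 R l1 l2 -> In x l1 -> exists y, In y l2 /\ R x y.
Proof.
  induction 1 as [|x1 y1 l1 l2 Hxy _ IH]; [intros []|]. intros [<- | Hx].
  - exists y1. split; [now left | exact Hxy].
  - destruct (IH Hx) as [z [Hz Hxz]]. exists z. split; [now right | exact Hxz].
Qed.

Lemma nth_error_pos v l i : pos v l = Some i -> nth_error l i = Some v.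
Proof.
  revert i; induction l as [|y l IH]; simpl; intros i Hi; [discriminate|].
  destruct (Nat.eqb_spec v y) as [-> | _].
  - now injection Hi as <-.
  - destruct (pos v l); simpl in Hi; [injection Hi as <-; apply IH | discriminate]; reflexivity.
Qed.

Lemma pos_In v l : In v l -> exists i, pos v l = Some i.
Proof.
  induction l as [|y l IH]; simpl; [intros []|]. intros Hv.
  destruct (Nat.eqb_spec v y); [now exists 0|].
  destruct Hv as [-> | Hv]; [congruence|].
  destruct (IH Hv) as [i ->]. now exists (S i).
Qed.

Definition index_of (l : list nat) (v : nat) : nat :=
  match pos v l with Some j => j | None => 0 end.

Lemma map_index_of l : NoDup l -> map (index_of l) l = seq 0 (length l).
Proof.
  induction 1 as [|x l Hx _ IH]; [reflexivity|]. simpl.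
  unfold index_of at 1. simpl. rewrite Nat.eqb_refl. f_equal.
  rewrite <- seq_shift, <- IH, map_map. apply map_ext_in. intros v Hv.
  unfold index_of. simpl. destruct (Nat.eqb_spec v x) as [-> | _]; [contradiction|].
  now destruct (pos_In _ _ Hv) as [i ->].
Qed.

Lemma lab_at_Some {L} (G : graph L) e T :
  lab_at G e = Some T -> exists a, nth_error (gE G) e = Some (T, a).
Proof.
  unfold lab_at. destruct (nth_error (gE G) e) as [[T' a]|]; simpl; [|discriminate].
  intros [= ->]. now exists a.
Qed.

Lemma fresh_gt {L} (G : graph L) x : In x (gV G) -> x < fresh G.
Proof.
  unfold fresh. generalize (gV G). induction l as [|y l IH]; simpl; [intros []|].
  intros [-> | Hx]; [lia | specialize (IH Hx); lia].
Qed.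

Lemma repl_go_id {L} (f : nat -> option (graph L)) es : forall i s,
  (forall j, i <= j -> f j = None) -> repl_go f es i s = ([], es).
Proof.
  induction es as [|x es IH]; intros i s Hf; simpl; auto.
  rewrite (Hf i), IH; auto.
  intros j Hj; apply Hf; lia.
Qed.

Lemma repl_go_single {L} (F : graph L) es : forall e i s x,
  nth_error es e = Some x ->
  exists s', s <= s' /\ repl_go (single (i + e) F) es i s =
    (new_nodes F s', firstn e es ++ new_edges F (snd x) s' ++ skipn (S e) es).
Proof.
  induction es as [|y es IH]; intros [|e] i s x Hx; try discriminate; simpl in Hx.
  - injection Hx as <-. exists s. split; auto.
    simpl. unfold single at 1. rewrite Nat.add_0_r, Nat.eqb_refl.
    rewrite repl_go_id; [simpl; now rewrite app_nil_r|].
    intros j Hj. unfold single. destruct (Nat.eqb_spec j i); [lia | reflexivity].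
  - destruct (IH e (S i) s x Hx) as [s' [Hs E]].
    exists s'. split; auto. simpl.
    replace (single (i + S e) F i) with (@None (graph L))
      by (unfold single; destruct (Nat.eqb_spec i (i + S e)); [lia | reflexivity]).
    replace (i + S e) with (S i + e) by lia. now rewrite E.
Qed.

Lemma repl_single_spec {L} (G : graph L) e F x :
  nth_error (gE G) e = Some x ->
  exists s, fresh G <= s /\
    gV (repl G (single e F)) = gV G ++ new_nodes F s /\
    gE (repl G (single e F)) = firstn e (gE G) ++ new_edges F (snd x) s ++ skipn (S e) (gE G).
Proof.
  intros Hx. destruct (repl_go_single F (gE G) e 0 (fresh G) x Hx) as [s [Hs E]].
  exists s. unfold repl. simpl in E |- *. now rewrite E.
Qed.

Lemma In_repl_go_kept {L} (f : nat -> option (graph L)) es : forall i s m x,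
  nth_error es m = Some x -> f (i + m) = None -> In x (snd (repl_go f es i s)).
Proof.
  induction es as [|y es IH]; intros i s [|m] x Hx Hf; try discriminate; simpl in Hx.
  - injection Hx as <-. rewrite Nat.add_0_r in Hf. simpl. rewrite Hf. now left.
  - rewrite <- Nat.add_succ_comm in Hf. simpl.
    destruct (f i); simpl; [apply in_or_app; right | right]; eapply IH; eauto.
Qed.

Lemma wf_div_dollar_edge N D :
  wf_typ (Div N D) -> exists i b, nth_error (gE D) i = Some (None, b).
Proof.
  intros Hwf. inversion Hwf; subst.
  destruct (filter _ (gE D)) as [|[[T|] b] l] eqn:Ef; try discriminate.
  - assert (Hin : In (Some T, b) (filter (fun d => match fst d with
                                                   | None => true | Some _ => false end) (gE D)))
      by (rewrite Ef; now left).
    now apply filter_In in Hin as [_ ?].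
  - assert (Hin : In (@None typ, b) (gE D)) by (eapply proj1, filter_In; rewrite Ef; now left).
    destruct (In_nth_error _ _ Hin) as [i Hi]. eauto.
Qed.

Section DivLeftConclusion.

Context {H : graph typ} {e : nat} {N : typ} {D : graph (option typ)} {a : list nat}.
Hypothesis He : nth_error (gE H) e = Some (N, a).

Let dollar_to_div (o : option typ) : typ := match o with None => Div N D | Some T => T end.

Lemma divL_intermediate_edges :
  exists s, gE (map_lab dollar_to_div (repl (map_lab Some H) (single e D))) =
    firstn e (gE H) ++ map (fun d => (dollar_to_div (fst d), snd d)) (new_edges D a s)
      ++ skipn (S e) (gE H).
Proof.
  assert (HeS : nth_error (gE (map_lab Some H)) e = Some (Some N, a))
    by (simpl; now rewrite nth_error_map, He).
  destruct (repl_single_spec _ _ D _ HeS) as [s [_ [_ E]]].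
  exists s. unfold map_lab at 1. cbn [gE]. rewrite E, !map_app.
  unfold map_lab. cbn [gE]. rewrite firstn_map, skipn_map, !map_map.
  assert (Hid : forall l : list (typ * list nat),
            map (fun x => (dollar_to_div (Some (fst x)), snd x)) l = l)
    by (intros l; rewrite <- map_id; apply map_ext; now intros []).
  now rewrite !Hid.
Qed.

Let premise_repl (Hs : nat -> graph typ) : nat -> option (graph typ) :=
  fun j => if (e <=? j) && (j <? e + length (gE D)) then
             match lab_at D (j - e) with
             | Some (Some _) => Some (Hs (j - e))
             | _ => None end
           else None.

Lemma gE_divL_concl Hs :
  gE (divL_concl H e N D Hs) =
    snd (repl_go (premise_repl Hs)
           (gE (map_lab dollar_to_div (repl (map_lab Some H) (single e D)))) 0
           (fresh (map_lab dollar_to_div (repl (map_lab Some H) (single e D))))).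
Proof. reflexivity. Qed.

Lemma In_divL_concl_kept Hs j x :
  j <> e -> nth_error (gE H) j = Some x -> In x (gE (divL_concl H e N D Hs)).
Proof.
  intros Hj Hx.
  assert (Hel : e < length (gE H)) by (apply nth_error_Some; congruence).
  assert (Hfe : length (firstn e (gE H)) = e) by (apply firstn_length_le; lia).
  destruct divL_intermediate_edges as [s E].
  rewrite gE_divL_concl, E. destruct (Nat.lt_ge_cases j e) as [Hlt | Hge].
  - apply (In_repl_go_kept _ _ 0 _ j).
    + rewrite nth_error_app1, nth_error_firstn by lia.
      now replace (j <? e) with true by (symmetry; apply Nat.ltb_lt; lia).
    + unfold premise_repl.
      now replace (e <=? 0 + j) with false by (symmetry; apply Nat.leb_gt; lia).
  - apply (In_repl_go_kept _ _ 0 _ (e + length (gE D) + (j - S e))).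
    + rewrite nth_error_app2, Hfe, nth_error_app2
        by (unfold new_edges; rewrite ?length_map; lia).
      unfold new_edges. rewrite !length_map, nth_error_skipn.
      now replace (S e + (e + length (gE D) + (j - S e) - e - length (gE D))) with j by lia.
    + unfold premise_repl.
      replace (0 + (e + length (gE D) + (j - S e)) <? e + length (gE D)) with false
        by (symmetry; apply Nat.ltb_ge; lia).
      now rewrite andb_false_r.
Qed.

Lemma In_divL_concl_div Hs :
  wf_typ (Div N D) -> exists b, In (Div N D, b) (gE (divL_concl H e N D Hs)).
Proof.
  intros Hwf.
  assert (Hel : e < length (gE H)) by (apply nth_error_Some; congruence).
  assert (Hfe : length (firstn e (gE H)) = e) by (apply firstn_length_le; lia).
  destruct (wf_div_dollar_edge _ _ Hwf) as [i [b Hi]].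
  assert (Hil : i < length (gE D)) by (apply nth_error_Some; congruence).
  destruct divL_intermediate_edges as [s E].
  exists (map (embed_node D a s) b).
  rewrite gE_divL_concl, E. apply (In_repl_go_kept _ _ 0 _ (e + i)).
  - rewrite nth_error_app2, Hfe, nth_error_app1 by (unfold new_edges; rewrite ?length_map; lia).
    unfold new_edges. rewrite nth_error_map, nth_error_map.
    now replace (e + i - e) with i by lia; rewrite Hi.
  - unfold premise_repl, lab_at. replace (0 + (e + i) - e) with i by lia. rewrite Hi.
    now destruct (_ && _).
Qed.

End DivLeftConclusion.

Lemma sub_at_app q r T :
  sub_at (q ++ r) T = match sub_at q T with Some U => sub_at r U | None => None end.
Proof.
  revert T; induction q as [|s q IH]; intros T; simpl; auto.
  destruct s, T; simpl; auto.
  - destruct (lab_at g i) as [[U|]|]; auto.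
  - destruct (lab_at g i) as [U|]; auto.
Qed.

Lemma top_path_snoc q s :
  top_path q -> match s with SDen _ => False | _ => True end -> top_path (q ++ [s]).
Proof.
  intros Hq Hs s' Hs'. apply in_app_or in Hs' as [Hs' | [<- | []]]; [exact (Hq s' Hs') | exact Hs].
Qed.

Lemma skeleton_Prod F :
  wf_graph F -> gE F = [] -> incl (gV F) (gext F) -> skeleton (Prod F).
Proof.
  intros [HV [Hext [Hincl _]]] EF HF. split; [exact EF|].
  apply Nat.le_antisymm; now apply NoDup_incl_length.
Qed.

Definition handle_like (n k : nat) (G : graph typ) : Prop :=
  gE G = [(Prim n k, gext G)] /\ Permutation (gV G) (gext G).

Lemma handle_like_giso {n k G G'} :
  giso typ_equiv G G' -> handle_like n k G -> handle_like n k G'.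
Proof.
  intros [f [_ [HV [Hext [es [Hes Hrel]]]]]] [EG VG].
  rewrite EG in Hrel. inversion Hrel as [| x y ? ? [Hxy Hmap] Hnil]; subst.
  inversion Hnil; subst. destruct y as [Y b]. simpl in Hxy, Hmap.
  inversion Hxy; subst. apply Permutation_length_1_inv in Hes. split.
  - now rewrite Hes, <- Hext.
  - rewrite <- Hext. apply (Permutation_trans (Permutation_sym HV)), Permutation_map, VG.
Qed.

Lemma handle_like_giso_handle n k G :
  wf_lgraph G -> handle_like n k G -> giso typ_equiv G (handle n k).
Proof.
  intros [[_ [Hext _]] HwfE] [EG VG].
  assert (Hk : length (gext G) = k).
  { rewrite EG in HwfE. now destruct (HwfE _ (or_introl eq_refl)) as [_ Hk]. }
  assert (Hmap : map (index_of (gext G)) (gext G) = seq 0 k)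
    by now rewrite map_index_of, Hk.
  exists (index_of (gext G)). split; [|split; [|split]].
  - intros x y Hx Hy Hxy.
    apply (Permutation_in _ VG) in Hx, Hy.
    destruct (pos_In _ _ Hx) as [i Hi], (pos_In _ _ Hy) as [j Hj].
    unfold index_of in Hxy. rewrite Hi, Hj in Hxy. subst j.
    apply nth_error_pos in Hi, Hj. congruence.
  - simpl. rewrite <- Hmap. now apply Permutation_map.
  - exact Hmap.
  - exists (gE (handle n k)). split; [reflexivity|].
    rewrite EG. simpl. repeat constructor. exact Hmap.
Qed.

Section LonelyPrimitive.

Variables (n k : nat) (Tset : typ -> Prop).

Inductive top_sub : typ -> Prop :=
| top_sub_prim : top_sub (Prim n k)
| top_sub_top T q V : Tset T -> top_path q -> sub_at q T = Some V -> top_sub V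
| top_sub_equiv U U' : top_sub U' -> typ_equiv U U' -> top_sub U.

Definition top_sub_graph (G : graph typ) : Prop :=
  forall x, In x (gE G) -> top_sub (fst x).

Lemma top_sub_num N D : top_sub (Div N D) -> top_sub N.
Proof.
  intros HU. remember (Div N D) as U eqn:EU. revert N D EU.
  induction HU as [| T q V HT Hq HV | U U' _ IH Heq]; intros N D EU; subst; try discriminate.
  - apply (top_sub_top T (q ++ [SNum])); auto.
    + now apply top_path_snoc.
    + now rewrite sub_at_app, HV.
  - inversion Heq; subst. eapply top_sub_equiv; eauto.
Qed.

Lemma top_sub_prod_edge F x : top_sub (Prod F) -> In x (gE F) -> top_sub (fst x).
Proof.
  intros HU. remember (Prod F) as U eqn:EU. revert F EU x.
  induction HU as [| T q V HT Hq HV | U U' _ IH Heq]; intros F EU x Hx; subst; try discriminate.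
  - destruct (In_nth_error _ _ Hx) as [i Hi].
    apply (top_sub_top T (q ++ [SProd i])); auto.
    + now apply top_path_snoc.
    + rewrite sub_at_app, HV. simpl. unfold lab_at. now rewrite Hi.
  - inversion Heq as [| | ? ? [f [_ [_ [_ [es [Hes Hrel]]]]]]]; subst.
    destruct (Forall2_In_l _ _ _ _ Hrel Hx) as [y [Hy [Hxy _]]].
    eapply top_sub_equiv; [eapply IH; [reflexivity | eapply Permutation_in; eauto] | exact Hxy].
Qed.

Hypothesis Tset_no_skeleton : forall T, Tset T -> no_skeleton_subtypes T.
Hypothesis Tset_lonely : forall T, Tset T -> lonely (Prim n k) T.

Lemma top_sub_not_skeleton U : top_sub U -> ~ skeleton U.
Proof.
  induction 1 as [| T q V HT _ HV | U U' _ IH Heq].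
  - intros [].
  - exact (Tset_no_skeleton _ HT q _ HV).
  - intros Hsk. apply IH. destruct U as [| | F]; try contradiction.
    inversion Heq as [| | ? ? [f [_ [HV [Hext [es [Hes Hrel]]]]]]]; subst.
    destruct Hsk as [EF Hlen]. rewrite EF in Hrel. inversion Hrel; subst.
    split.
    + now apply Permutation_nil.
    + now rewrite <- Hext, length_map, <- (Permutation_length HV), length_map.
Qed.

Lemma top_sub_not_div_prim D : ~ top_sub (Div (Prim n k) D).
Proof.
  intros HU. remember (Div (Prim n k) D) as U eqn:EU. revert D EU.
  induction HU as [| T q V HT Hq HV | U U' _ IH Heq]; intros D EU; subst; try discriminate.
  - destruct (Tset_lonely _ HT (q ++ [SNum])) as [q' [i [M [Eq _]]]].
    + now apply top_path_snoc.
    + now rewrite sub_at_app, HV.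
    + now apply app_inj_tail in Eq as [_ ?].
  - inversion Heq as [| ? ? ? ? Hp _ |]; subst. inversion Hp; subst. eauto.
Qed.

Lemma top_sub_prod_not_single_prim F a : gE F = [(Prim n k, a)] -> ~ top_sub (Prod F).
Proof.
  intros EF HU. remember (Prod F) as U eqn:EU. revert F a EF EU.
  induction HU as [| T q V HT Hq HV | U U' _ IH Heq]; intros F a EF EU; subst; try discriminate.
  - destruct (Tset_lonely _ HT (q ++ [SProd 0])) as [q' [i [M [Eq [HM Hlen]]]]].
    + now apply top_path_snoc.
    + rewrite sub_at_app, HV. simpl. unfold lab_at. now rewrite EF.
    + apply app_inj_tail in Eq as [<- _]. rewrite HV in HM.
      injection HM as <-. rewrite EF in Hlen. simpl in Hlen. lia.
  - inversion Heq as [| | ? ? [f [_ [_ [_ [es [Hes Hrel]]]]]]]; subst.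
    rewrite EF in Hrel. inversion Hrel as [| x y ? ? [Hxy Hmap] Hnil]; subst.
    inversion Hnil; subst. inversion Hxy; subst.
    apply Permutation_length_1_inv in Hes.
    destruct y as [Y b]. simpl in *. subst Y. eapply IH; eauto.
Qed.

Lemma top_sub_graph_divL H e N D Hs :
  wf_typ (Div N D) -> lab_at H e = Some N ->
  top_sub_graph (divL_concl H e N D Hs) -> top_sub (Div N D) /\ top_sub_graph H.
Proof.
  intros Hwf HN HG. destruct (lab_at_Some _ _ _ HN) as [a He].
  destruct (In_divL_concl_div He Hs Hwf) as [b Hb].
  assert (HD : top_sub (Div N D)) by exact (HG _ Hb).
  split; [exact HD|]. intros x Hx. destruct (In_nth_error _ _ Hx) as [j Hj].
  destruct (Nat.eq_dec j e) as [-> | Hne].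
  - rewrite He in Hj. injection Hj as <-. exact (top_sub_num _ _ HD).
  - exact (HG _ (In_divL_concl_kept He Hs _ _ Hne Hj)).
Qed.

Lemma top_sub_graph_repl_single G e F :
  lab_at G e = Some (Prod F) -> top_sub_graph G -> top_sub_graph (repl G (single e F)).
Proof.
  intros HF HG. destruct (lab_at_Some _ _ _ HF) as [a He].
  destruct (repl_single_spec _ _ F _ He) as [s [_ [_ E]]].
  unfold top_sub_graph in HG. rewrite <- (firstn_skipn_middle _ _ He) in HG.
  intros x Hx. rewrite E in Hx.
  apply in_app_or in Hx as [Hx | Hx]; [apply HG, in_or_app; now left|].
  apply in_app_or in Hx as [Hx | Hx]; [|apply HG, in_or_app; right; now right].
  unfold new_edges in Hx. apply in_map_iff in Hx as [y [<- Hy]].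
  apply (top_sub_prod_edge F y); [|exact Hy].
  apply (HG (Prod F, a)), in_or_app. right. now left.
Qed.

Lemma top_sub_graph_giso {G G'} :
  giso typ_equiv G G' -> top_sub_graph G' -> top_sub_graph G.
Proof.
  intros [f [_ [_ [_ [es [Hes Hrel]]]]]] HG' x Hx.
  destruct (Forall2_In_l _ _ _ _ Hrel Hx) as [y [Hy [Hxy _]]].
  eapply top_sub_equiv; [apply HG'; eapply Permutation_in; eauto | exact Hxy].
Qed.

Lemma prodL_premise_not_handle_like G e F :
  wf_lgraph G -> lab_at G e = Some (Prod F) -> top_sub_graph G ->
  ~ handle_like n k (repl G (single e F)).
Proof.
  intros [[_ [_ [HextG _]]] HwfE] HF HG [EP VP]. destruct (lab_at_Some _ _ _ HF) as [a He].
  pose proof (HG _ (nth_error_In _ _ He)) as HPF.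
  destruct (repl_single_spec _ _ F _ He) as [s [Hs [EV EE]]].
  change (gext (repl G (single e F))) with (gext G) in EP, VP.
  rewrite EE in EP. rewrite EV in VP.
  assert (Hlen : length (gE F) <= 1).
  { apply (f_equal (@length _)) in EP. rewrite !length_app in EP.
    unfold new_edges in EP. rewrite length_map in EP. simpl in EP. lia. }
  destruct (gE F) as [|y [|y' l]] eqn:EF; simpl in Hlen; try lia.
  - (* An internal node [v] of [F] would become the node [s + v], fresh for [G]. *)
    apply (top_sub_not_skeleton _ HPF).
    assert (HwfF : wf_graph F).
    { destruct (HwfE _ (nth_error_In _ _ He)) as [Hw _]. now inversion Hw. }
    apply skeleton_Prod; auto. intros v Hv.
    destruct (in_dec Nat.eq_dec v (gext F)) as [| Hout]; [assumption | exfalso].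
    assert (Hnew : In (s + v) (gext G)).
    { apply (Permutation_in _ VP), in_or_app. right. apply in_map, filter_In.
      split; [exact Hv|]. destruct (pos v (gext F)) eqn:Hp; [|reflexivity].
      exfalso. exact (Hout (nth_error_In _ _ (nth_error_pos _ _ _ Hp))). }
    apply HextG, fresh_gt in Hnew. lia.
  - unfold new_edges in EP. rewrite EF in EP. simpl in EP.
    apply app_eq_unit in EP as [[_ EP] | [_ EP]]; [|discriminate].
    injection EP as Hy _. destruct y as [Y b]. simpl in Hy. subst Y.
    exact (top_sub_prod_not_single_prim F b EF HPF).
Qed.

Lemma handle_like_of_derivable G A :
  derivable G A -> A = Prim n k -> top_sub_graph G -> handle_like n k G.
Proof.
  intros Hd. induction Hd as [n' k' | N D H e A Hs HwfD HN _ IH _ _ | | G e F A HwfG HF _ IH |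
                              | G G' A A' _ IH Hiso HA]; intros EA HG; try discriminate.
  - injection EA as -> ->. split; reflexivity.
  - exfalso. destruct (top_sub_graph_divL _ _ _ _ Hs HwfD HN HG) as [HD HH].
    destruct (IH EA HH) as [EH _]. unfold lab_at in HN. rewrite EH in HN.
    destruct e as [|e]; [|now destruct e]. injection HN as <-.
    exact (top_sub_not_div_prim _ HD).
  - exfalso. apply (prodL_premise_not_handle_like G e F HwfG HF HG).
    exact (IH EA (top_sub_graph_repl_single _ _ _ HF HG)).
  - subst A'. inversion HA; subst.
    exact (handle_like_giso Hiso (IH eq_refl (top_sub_graph_giso Hiso HG))).
Qed.

End LonelyPrimitive.

Theorem corollary1 (n k : nat) (Tset : typ -> Prop) (H : graph typ) :
  (forall T, Tset T -> wf_typ T /\ no_skeleton_subtypes T /\ lonely (Prim n k) T) ->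
  wf_lgraph H ->
  (forall e, In e (gE H) -> fst e = Prim n k \/ exists T, Tset T /\ typ_equiv (fst e) T) ->
  derivable H (Prim n k) ->
  giso typ_equiv H (handle n k).
Proof.
  intros HT Hwf Hlab Hd.
  apply handle_like_giso_handle; [exact Hwf|].
  apply (handle_like_of_derivable n k Tset (fun T HT' => proj1 (proj2 (HT T HT')))
           (fun T HT' => proj2 (proj2 (HT T HT'))) H (Prim n k) Hd eq_refl).
  intros x Hx. destruct (Hlab x Hx) as [-> | [T [HTx Heq]]]; [constructor|].
  apply (top_sub_equiv _ _ _ _ T); [|exact Heq].
  apply (top_sub_top _ _ _ T []); [exact HTx | intros s [] | reflexivity].
Qed.
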